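(* Let $K \ge 1$ and let $\mathbf{\Phi} \in \mathbb{R}^{m\times n}$ satisfy the RIP with $\delta_{K+1} < \frac{1}{\sqrt{K}+1}$. Let $\mathbf{x} \in \mathbb{R}^n$ with $|\mathrm{supp}(\mathbf{x})| = K$, let $\mathbf{v} \in \mathbb{R}^m$, and let $\mathbf{y} = \mathbf{\Phi}\mathbf{x} + \mathbf{v}$. If $$\sqrt{\mathrm{SNR}} > \frac{2\sqrt{K}\,(1+\delta_{K+1})}{\bigl(1-(\sqrt{K}+1)\delta_{K+1}\bigr)\sqrt{\mathrm{MAR}}},$$ then OMP run for $K$ iterations on $(\mathbf{\Phi},\mathbf{y},K)$ selects an index of $\mathrm{supp}(\mathbf{x})$ at every iteration (regardless of how ties are broken), so that its output satisfies $\mathcal{T}^K = \mathrm{supp}(\mathbf{x})$.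
   Context: Notation: $\Omega=\{1,\dots,n\}$; $\phi_i$ denotes the $i$-th column of $\mathbf{\Phi}$; $\mathbf{\Phi}'$ is the transpose; for $\mathcal{S}\subseteq\Omega$, $\mathbf{\Phi}_{\mathcal{S}}$ is the submatrix of columns indexed by $\mathcal{S}$ and $\mathbf{x}_{\mathcal{S}}$ the restriction of $\mathbf{x}$ to $\mathcal{S}$. A vector is $K$-sparse if it has at most $K$ nonzero entries. RIP: for an integer $s\ge1$, the isometry constant $\delta_s$ of $\mathbf{\Phi}$ is the smallest $c\in[0,1)$ such that $(1-c)\|\mathbf{z}\|_2^2 \le \|\mathbf{\Phi}\mathbf{z}\|_2^2 \le (1+c)\|\mathbf{z}\|_2^2$ for all $s$-sparse $\mathbf{z}\in\mathbb{R}^n$; ''$\mathbf{\Phi}$ satisfies the RIP with $\delta_s<a$'' means such a constant exists and is $<a$. $\mathrm{SNR} := \|\mathbf{\Phi}\mathbf{x}\|_2^2/\|\mathbf{v}\|_2^2$ (taken as $+\infty$ if $\mathbf{v}=\mathbf{0}$), and with $\mathcal{T}=\mathrm{supp}(\mathbf{x})$, $\mathrm{MAR} := \dfrac{\min_{j\in\mathcal{T}}|x_j|^2}{\|\mathbf{x}\|_2^2/K}$. OMP (orthogonal matching pursuit) with input $\mathbf{\Phi},\mathbf{y},K$: set $\mathcal{T}^0=\emptyset$, $\mathbf{r}^0=\mathbf{y}$; for $k=1,\dots,K$: choose $t^k \in \arg\max_{i\in\Omega\setminus\mathcal{T}^{k-1}} |\langle\phi_i,\mathbf{r}^{k-1}\rangle|$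 (ties broken arbitrarily), set $\mathcal{T}^k=\mathcal{T}^{k-1}\cup\{t^k\}$, $\mathbf{x}^k = \arg\min_{\mathbf{u}:\,\mathrm{supp}(\mathbf{u})\subseteq\mathcal{T}^k}\|\mathbf{y}-\mathbf{\Phi}\mathbf{u}\|_2$ (least squares on $\mathcal{T}^k$), and $\mathbf{r}^k=\mathbf{y}-\mathbf{\Phi}\mathbf{x}^k$. Output: $\mathcal{T}^K$ and $\mathbf{x}^K$. *)

From HB Require Import structures.
From mathcomp Require Import all_boot all_order all_algebra.
Set Implicit Arguments. Unset Strict Implicit. Unset Printing Implicit Defensive.
Import Order.TTheory GRing.Theory Num.Theory.
Local Open Scope ring_scope.

Section OMPDefs.
Variable R : rcfType.

Definition norm2 {p : nat} (u : 'cV[R]_p) : R := \sum_(i < p) u i 0 ^+ 2.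

Definition supp {p : nat} (u : 'cV[R]_p) : {set 'I_p} := [set i | u i 0 != 0].

Definition sparse {p : nat} (s : nat) (u : 'cV[R]_p) : Prop := (#|supp u| <= s)%N.

Definition RIP_bound {m n : nat} (Phi : 'M[R]_(m, n)) (s : nat) (c : R) : Prop :=
  0 <= c /\ c < 1 /\
  forall z : 'cV[R]_n, sparse s z ->
    (1 - c) * norm2 z <= norm2 (Phi *m z) /\ norm2 (Phi *m z) <= (1 + c) * norm2 z.

Definition isometry_constant {m n : nat} (Phi : 'M[R]_(m, n)) (s : nat) (delta : R)
  : Prop :=
  RIP_bound Phi s delta /\ forall c, RIP_bound Phi s c -> delta <= c.

Definition colip {m n : nat} (Phi : 'M[R]_(m, n)) (i : 'I_n) (r : 'cV[R]_m) : R :=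
  \sum_(j < m) Phi j i * r j 0.

Definition is_ls {m n : nat} (Phi : 'M[R]_(m, n)) (y : 'cV[R]_m) (S : {set 'I_n})
  (u : 'cV[R]_n) : Prop :=
  supp u \subset S /\
  forall w : 'cV[R]_n, supp w \subset S ->
    norm2 (y - Phi *m u) <= norm2 (y - Phi *m w).

Definition Tset {n : nat} (t : nat -> 'I_n) (k : nat) : {set 'I_n} :=
  \bigcup_(1 <= j < k.+1) [set t j].

(* (t, u) is a run of OMP on (Phi, y, K) (with some tie-breaking):
   t k = t^k is the index chosen at iteration k, u k = x^k the LS estimate,
   residual r^k = y - Phi x^k; x^0 = 0 so that r^0 = y. *)
Definition omp_run {m n : nat} (Phi : 'M[R]_(m, n)) (y : 'cV[R]_m) (K : nat)
  (t : nat -> 'I_n) (u : nat -> 'cV[R]_n) : Prop :=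
  u 0%N = 0 /\
  forall k : nat, (1 <= k <= K)%N ->
    [/\ t k \notin Tset t k.-1,
        (forall i : 'I_n, i \notin Tset t k.-1 ->
           `|colip Phi i (y - Phi *m u k.-1)| <= `|colip Phi (t k) (y - Phi *m u k.-1)|)
      & is_ls Phi y (Tset t k) (u k)].

(* The minimum over
   the (nonempty) support is computed as a fold of Num.min started at
   ||x||^2, which is >= every |x_j|^2, so it does not affect the value. *)
Definition minsq {n : nat} (x : 'cV[R]_n) : R :=
  \big[Num.min/norm2 x]_(j in supp x) (x j 0 ^+ 2).

Definition MAR {n : nat} (K : nat) (x : 'cV[R]_n) : R :=
  minsq x / (norm2 x / K%:R).

(* SNR (used only when v <> 0; SNR = +oo when v = 0) *)
Definition SNR {m n : nat} (Phi : 'M[R]_(m, n)) (x : 'cV[R]_n) (v : 'cV[R]_m) : R :=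
  norm2 (Phi *m x) / norm2 v.

End OMPDefs.

(* While OMP has only picked indices of T = supp x,
   u is supported on the picked set S, the residual r = Phi z + v with z = x - u
   is orthogonal to the picked columns, and z is K-sparse and equals x on
   A = T \ S.  If the next index j were outside T, maximality of |<phi_j, r>| gives
     |Phi z|^2 - |Phi z| |v| <= <Phi z, r> <= |z_A|_1 |<phi_j, r>|
                             <= sqrt|A| |z| (delta |z| + sqrt(1 + delta) |v|),
   using the RIP bounds |Phi z|^2 >= (1 - delta) |z|^2 and |<phi_j, Phi z>| <= delta |z|.
   Together with |z| >= sqrt(|A| min_T x_i^2) this forces
   (1 - (sqrt K + 1) delta) sqrt(min_T x_i^2) <= 2 sqrt(1 + delta) |v|,
   which is exactly what the SNR/MAR hypothesis rules out. *)

From HB Require Import structures.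
From mathcomp Require Import all_boot all_order all_algebra.
From mathcomp Require Import ring lra.
Set Implicit Arguments. Unset Strict Implicit. Unset Printing Implicit Defensive.
Import Order.TTheory GRing.Theory Num.Theory.
Local Open Scope ring_scope.

Section InnerProduct.
Variable R : rcfType.

Definition ip {p : nat} (a b : 'cV[R]_p) : R := \sum_i a i 0 * b i 0.

Definition vnorm {p : nat} (a : 'cV[R]_p) : R := Num.sqrt (norm2 a).

Lemma norm2E p (a : 'cV[R]_p) : norm2 a = ip a a.
Proof. by apply: eq_bigr => i _; rewrite expr2. Qed.

Lemma ipC p (a b : 'cV[R]_p) : ip a b = ip b a.
Proof. by apply: eq_bigr => i _; rewrite mulrC. Qed.

Lemma ipDl p (a b c : 'cV[R]_p) : ip (a + b) c = ip a c + ip b c.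
Proof. by rewrite /ip -big_split; apply: eq_bigr => i _; rewrite mxE mulrDl. Qed.

Lemma ipZl p k (a b : 'cV[R]_p) : ip (k *: a) b = k * ip a b.
Proof. by rewrite /ip mulr_sumr; apply: eq_bigr => i _; rewrite mxE mulrA. Qed.

Lemma ipNl p (a b : 'cV[R]_p) : ip (- a) b = - ip a b.
Proof. by rewrite /ip -sumrN; apply: eq_bigr => i _; rewrite mxE mulNr. Qed.

Lemma ipBl p (a b c : 'cV[R]_p) : ip (a - b) c = ip a c - ip b c.
Proof. by rewrite ipDl ipNl. Qed.

Lemma ipDr p (a b c : 'cV[R]_p) : ip c (a + b) = ip c a + ip c b.
Proof. by rewrite ipC ipDl !(ipC c). Qed.

Lemma ipZr p k (a b : 'cV[R]_p) : ip b (k *: a) = k * ip b a.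
Proof. by rewrite ipC ipZl ipC. Qed.

Lemma ipBr p (a b c : 'cV[R]_p) : ip c (a - b) = ip c a - ip c b.
Proof. by rewrite ipC ipBl !(ipC c). Qed.

Lemma ip_ge0 p (a : 'cV[R]_p) : 0 <= ip a a.
Proof. by apply: sumr_ge0 => i _; rewrite -expr2 sqr_ge0. Qed.

Lemma norm2_ge0 p (a : 'cV[R]_p) : 0 <= norm2 a.
Proof. by rewrite norm2E ip_ge0. Qed.

Lemma ip_eq0 p (a : 'cV[R]_p) : ip a a = 0 -> a = 0.
Proof.
move=> /psumr_eq0P a0; apply/matrixP => i j; rewrite (ord1 j) mxE.
have /eqP := a0 (fun i _ => ltac:(by rewrite -expr2 sqr_ge0)) i isT.
by rewrite mulf_eq0 orbb => /eqP.
Qed.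

Lemma norm2_eq0 p (a : 'cV[R]_p) : (norm2 a == 0) = (a == 0).
Proof.
apply/eqP/eqP => [|->]; first by rewrite norm2E; exact: ip_eq0.
by rewrite /norm2 big1 // => i _; rewrite mxE expr0n.
Qed.

Lemma vnorm_ge0 p (a : 'cV[R]_p) : 0 <= vnorm a.
Proof. exact: sqrtr_ge0. Qed.

Lemma sqr_vnorm p (a : 'cV[R]_p) : vnorm a ^+ 2 = norm2 a.
Proof. by rewrite sqr_sqrtr // norm2_ge0. Qed.

Lemma cauchy_schwarz p (a b : 'cV[R]_p) : ip a b ^+ 2 <= ip a a * ip b b.
Proof.
have [/ip_eq0 b0|bn0] := eqVneq (ip b b) 0.
  rewrite b0 /ip big1 ?expr0n ?mulr_ge0 ?ip_ge0 // => i _.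
  by rewrite mxE mulr0.
have bpos : 0 < ip b b by rewrite lt_def bn0 ip_ge0.
have := ip_ge0 (ip b b *: a - ip a b *: b).
rewrite !(ipBl, ipBr, ipZl, ipZr) (ipC b a); nra.
Qed.

Lemma normr_ip_le p (a b : 'cV[R]_p) : `|ip a b| <= vnorm a * vnorm b.
Proof.
rewrite /vnorm -sqrtrM ?norm2_ge0 // -sqrtr_sqr !norm2E ler_sqrt ?cauchy_schwarz //.
by rewrite mulr_ge0 ?ip_ge0.
Qed.

Lemma ip_delta p (a : 'cV[R]_p) j : ip a (delta_mx j 0) = a j 0.
Proof.
rewrite /ip (bigD1 j) //= big1 => [|i /negbTE ne]; first by rewrite mxE !eqxx mulr1 addr0.
by rewrite mxE ne mulr0.
Qed.

Lemma norm2_delta p (j : 'I_p) : norm2 (delta_mx j 0 : 'cV[R]_p) = 1.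
Proof. by rewrite norm2E ip_delta mxE !eqxx. Qed.

Lemma norm2_add_delta p (z : 'cV[R]_p) j (tau : R) : z j 0 = 0 ->
  norm2 (z + tau *: delta_mx j 0) = norm2 z + tau ^+ 2.
Proof.
move=> zj; rewrite !norm2E !(ipDl, ipDr, ipZl, ipZr) (ipC _ z) !ip_delta.
by rewrite mxE !eqxx zj -norm2E /= mulr1 !mulr0 !addr0 add0r expr2.
Qed.

Lemma sum_sqr_le_norm2 p (z : 'cV[R]_p) (A : {set 'I_p}) :
  \sum_(i in A) z i 0 ^+ 2 <= norm2 z.
Proof.
rewrite /norm2 [X in _ <= X](bigID (mem A)) /= lerDl.
by apply: sumr_ge0 => i _; apply: sqr_ge0.
Qed.

Lemma sum_abs_le_sqrt_card p (z : 'cV[R]_p) (A : {set 'I_p}) :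
  \sum_(i in A) `|z i 0| <= Num.sqrt #|A|%:R * vnorm z.
Proof.
pose za : 'cV[R]_p := \col_i (if i \in A then `|z i 0| else 0).
pose indA : 'cV[R]_p := \col_i (if i \in A then 1 else 0).
have <- : ip za indA = \sum_(i in A) `|z i 0|.
  rewrite /ip [RHS]big_mkcond /=; apply: eq_bigr => i _; rewrite !mxE.
  by case: ifP; rewrite ?mulr1 ?mulr0.
have vnorm_indA : vnorm indA = Num.sqrt #|A|%:R.
  rewrite /vnorm norm2E /ip -sumr_const [in RHS]big_mkcond /=; congr Num.sqrt.
  by apply: eq_bigr => i _; rewrite !mxE; case: ifP; rewrite ?mulr1 ?mulr0.
have vnorm_za : vnorm za <= vnorm z.
  rewrite ler_sqrt ?norm2_ge0 //; apply: le_trans (sum_sqr_le_norm2 z A).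
  rewrite /norm2 [leRHS]big_mkcond /=; apply: ler_sum => i _; rewrite !mxE.
  by case: ifP; rewrite ?expr0n // real_normK ?num_real.
apply: le_trans (ler_norm _) _; apply: le_trans (normr_ip_le _ _) _.
by rewrite vnorm_indA mulrC ler_wpM2l ?sqrtr_ge0.
Qed.

End InnerProduct.

Section Support.
Variable R : rcfType.

Lemma notin_supp p (a : 'cV[R]_p) l : l \notin supp a -> a l 0 = 0.
Proof. by rewrite inE negbK => /eqP. Qed.

Lemma supp_subset p (a : 'cV[R]_p) (A : {set 'I_p}) :
  (forall l, l \notin A -> a l 0 = 0) -> supp a \subset A.
Proof.
by move=> a0; apply/subsetP => l; rewrite inE; apply: contraR => /a0 ->.
Qed.

Lemma sparse_subset p s (a : 'cV[R]_p) (A : {set 'I_p}) :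
  supp a \subset A -> (#|A| <= s)%N -> sparse s a.
Proof. by move=> aA As; apply: leq_trans (subset_leq_card aA) As. Qed.

Lemma supp_add_delta p (z : 'cV[R]_p) j (tau : R) :
  supp (z + tau *: delta_mx j 0) \subset j |: supp z.
Proof.
apply: supp_subset => l; rewrite !inE negb_or negbK => /andP[lj /eqP zl].
by rewrite !mxE zl (negbTE lj) mulr0 addr0.
Qed.

Lemma sparseS_add_delta p s (z : 'cV[R]_p) j (tau : R) :
  sparse s z -> sparse s.+1 (z + tau *: delta_mx j 0).
Proof.
move=> zs; apply: sparse_subset (supp_add_delta _ _ _) _.
by rewrite cardsU1; case: (_ \notin _); rewrite ?add1n ?add0n // ltnW.
Qed.

End Support.

Section RIP.
Variables (R : rcfType) (m n : nat) (Phi : 'M[R]_(m, n)).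

Lemma colipE i r : colip Phi i r = ip (col i Phi) r.
Proof. by apply: eq_bigr => l _; rewrite mxE. Qed.

Lemma ip_mulmx z r : ip (Phi *m z) r = \sum_i z i 0 * colip Phi i r.
Proof.
rewrite /ip /colip; under eq_bigr do rewrite mxE big_distrl /=.
rewrite exchange_big /=; apply: eq_bigr => i _; rewrite big_distrr /=.
by apply: eq_bigr => l _; rewrite mulrCA mulrA.
Qed.

Lemma norm2_mulmx_add_delta z j (tau : R) :
  norm2 (Phi *m (z + tau *: delta_mx j 0)) =
  norm2 (Phi *m z) + 2 * tau * colip Phi j (Phi *m z) + tau ^+ 2 * norm2 (col j Phi).
Proof.
rewrite mulmxDr -scalemxAr -colE !norm2E !(ipDl, ipDr, ipZl, ipZr) colipE.
by rewrite (ipC (Phi *m z)); ring.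
Qed.

Lemma RIP_vnorm s d z : RIP_bound Phi s d -> sparse s z ->
  (1 - d) * vnorm z ^+ 2 <= vnorm (Phi *m z) ^+ 2 /\
  vnorm (Phi *m z) <= Num.sqrt (1 + d) * vnorm z.
Proof.
move=> [d0 [_ RIP]] zs; have [lo hi] := RIP z zs.
by rewrite !sqr_vnorm /vnorm -sqrtrM ?addr_ge0 // ler_sqrt ?mulr_ge0 ?norm2_ge0 ?addr_ge0.
Qed.

Lemma RIP_vnorm_col s d j : (0 < s)%N -> RIP_bound Phi s d ->
  vnorm (col j Phi) <= Num.sqrt (1 + d).
Proof.
move=> s0 Hd; have ds : sparse s (delta_mx j 0 : 'cV[R]_n).
  apply: (@sparse_subset _ _ _ _ [set j]); last by rewrite cards1.
  by apply: supp_subset => l; rewrite !inE mxE => /negbTE ->.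
have [_] := RIP_vnorm Hd ds.
by rewrite -colE /vnorm norm2_delta sqrtr1 mulr1.
Qed.

(* Apply the RIP of order s+1 to z +- |z| e_j: the cross term 2 |z| <phi_j, Phi z>
   is squeezed between the lower and upper bounds. *)
Lemma RIP_colip_offsupp s d z j : RIP_bound Phi s.+1 d -> sparse s z -> z j 0 = 0 ->
  `|colip Phi j (Phi *m z)| <= d * vnorm z.
Proof.
move=> Hd zs zj; have [d0 [_ RIP]] := Hd.
have [z0|zn0] := eqVneq z 0.
  by rewrite z0 mulmx0 /colip big1 ?normr0 ?mulr_ge0 ?vnorm_ge0 // => l _; rewrite mxE mulr0.
set Z := vnorm z.
have Zpos : 0 < Z by rewrite sqrtr_gt0 lt_def norm2_eq0 zn0 norm2_ge0.
have [l1 u1] := RIP _ (sparseS_add_delta j Z zs).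
have [l2 u2] := RIP _ (sparseS_add_delta j (- Z) zs).
move: l1 u1 l2 u2; rewrite !norm2_mulmx_add_delta !norm2_add_delta // sqrrN.
rewrite -(sqr_vnorm z) -/Z.
set b := colip _ _ _; set P := norm2 (Phi *m z); set N := norm2 (col j Phi).
move=> l1 u1 l2 u2.
rewrite -(ler_pM2r Zpos) -[in X in X <= _](gtr0_norm Zpos) -normrM.
by rewrite ler_norml; apply/andP; split; nra.
Qed.

(* Perturbing u by a small multiple of e_i cannot decrease the residual, which
   forces the first-order term <phi_i, r> to vanish. *)
Lemma is_ls_orth y S u i : is_ls Phi y S u -> i \in S ->
  colip Phi i (y - Phi *m u) = 0.
Proof.
move=> [uS umin] iS.
set r := y - Phi *m u; set a := colip Phi i r; set N := norm2 (col i Phi).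
have N0 : 0 <= N by apply: norm2_ge0.
set e := a / (N + 1).
have ea : e * (N + 1) = a by rewrite /e divfK // gt_eqF // ltr_wpDl.
have eS : supp (u + e *: delta_mx i 0) \subset S.
  by apply: subset_trans (supp_add_delta _ _ _) _; rewrite subUset sub1set iS uS.
have := umin _ eS.
have -> : y - Phi *m (u + e *: delta_mx i 0) = r - e *: col i Phi.
  by rewrite mulmxDr -scalemxAr -colE /r opprD addrA.
rewrite !norm2E !(ipBl, ipBr, ipZl, ipZr) (ipC y (col i Phi)).
rewrite (ipC (Phi *m u) (col i Phi)) -(norm2E (col i Phi)) -/N.
have aE : a = ip (col i Phi) y - ip (col i Phi) (Phi *m u) by rewrite /a colipE ipBr.
move=> min_r; have e2 : e ^+ 2 * (N + 2) <= 0 by nra.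
have e0 : e = 0.
  apply/eqP; rewrite -sqrf_eq0 eq_le sqr_ge0 andbT.
  by rewrite -(pmulr_lle0 _ (_ : 0 < N + 2)) // ltr_wpDl.
by rewrite -ea e0 mul0r.
Qed.

End RIP.

Section OMPStep.
Variables (R : rcfType) (m n : nat) (Phi : 'M[R]_(m, n)).

(* The inequality chain of the header, with k = sqrt K, q = sqrt |A|,
   s = sqrt (min x_i^2), g = sqrt (1 + d), e = |v|, P = |Phi z|, Z = |z|,
   W = |z_A|_1 and B = |<phi_j, r>|. *)
Lemma omp_step_ineq (k d g e q s P Z W B : R) :
  0 <= d -> 0 <= g -> 0 <= e -> 0 < s -> 1 <= q -> q <= k -> q * s <= Z ->
  (1 - d) * Z ^+ 2 <= P ^+ 2 -> P <= g * Z ->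
  P ^+ 2 - P * e <= W * B -> 0 <= W -> W <= q * Z -> B <= d * Z + g * e ->
  (1 - (k + 1) * d) * s <= 2 * g * e.
Proof.
move=> d0 g0 e0 s0 q1 qk qsZ lo hi PW W0 WZ Bb.
have q0 : 0 < q by apply: lt_le_trans q1; exact: ltr01.
have Z0 : 0 < Z by apply: lt_le_trans qsZ; exact: mulr_gt0.
have energy : (1 - d) * Z ^+ 2 - g * Z * e <= q * Z * (d * Z + g * e).
  apply: le_trans (_ : P ^+ 2 - P * e <= _); first by apply: lerB => //; rewrite ler_wpM2r.
  apply: (le_trans PW); apply: le_trans (_ : W * (d * Z + g * e) <= _).
    by rewrite ler_wpM2l.
  by rewrite ler_wpM2r // addr_ge0 // mulr_ge0 // ltW.
have lin : (1 - d - q * d) * Z <= (1 + q) * g * e.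
  by rewrite -subr_le0 -(pmulr_rle0 _ Z0); nra.
have [cK0|cK0] := lerP (1 - (k + 1) * d) 0.
  by apply: le_trans (_ : 0 <= _); nra.
have ge0 : 0 <= g * e by apply: mulr_ge0.
have kq : (1 - (k + 1) * d) * Z <= (1 - d - q * d) * Z.
  by rewrite ler_wpM2r ?(ltW Z0) //; nra.
have sZ : (1 - (k + 1) * d) * (q * s) <= (1 - (k + 1) * d) * Z.
  by rewrite ler_wpM2l // ltW.
rewrite -(ler_pM2r q0); nra.
Qed.

Lemma ip_mulmx_le_colip z r (A S : {set 'I_n}) j :
  [disjoint A & S] -> supp z \subset A :|: S ->
  (forall i, i \in S -> colip Phi i r = 0) ->
  (forall i, i \notin S -> `|colip Phi i r| <= `|colip Phi j r|) ->
  ip (Phi *m z) r <= (\sum_(i in A) `|z i 0|) * `|colip Phi j r|.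
Proof.
move=> AS zAS orth jmax; rewrite ip_mulmx (bigID (mem A)) /=.
rewrite [X in _ + X]big1 ?addr0 => [|i iA].
  rewrite mulr_suml; apply: ler_sum => i iA.
  apply: le_trans (ler_norm _) _; rewrite normrM ler_wpM2l // jmax //.
  by apply: contraTN iA => iS; rewrite (disjointFl AS).
have [iS|iS] := boolP (i \in S); first by rewrite orth // mulr0.
rewrite notin_supp ?mul0r //; apply/negP => /(subsetP zAS).
by rewrite inE (negbTE iA) (negbTE iS).
Qed.

Lemma omp_step_in_supp (x : 'cV[R]_n) (v : 'cV[R]_m) K d s
    (S : {set 'I_n}) (u : 'cV[R]_n) (j : 'I_n) :
  RIP_bound Phi K.+1 d -> #|supp x| = K ->
  0 < s -> (forall i, i \in supp x -> s <= x i 0 ^+ 2) ->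
  2 * Num.sqrt (1 + d) * vnorm v < (1 - (Num.sqrt K%:R + 1) * d) * Num.sqrt s ->
  S \subset supp x -> (#|S| < K)%N -> supp u \subset S ->
  (forall i, i \in S -> colip Phi i (Phi *m x + v - Phi *m u) = 0) ->
  j \notin S ->
  (forall i, i \notin S -> `|colip Phi i (Phi *m x + v - Phi *m u)| <=
                           `|colip Phi j (Phi *m x + v - Phi *m u)|) ->
  j \in supp x.
Proof.
move=> Hd cardx s0 xs noise ST cardS uS orth jS jmax.
apply: contraT => jx; have [d0 _] := Hd.
set r := Phi *m x + v - Phi *m u in orth jmax *.
set z := x - u; set A := supp x :\: S.
have rE : r = Phi *m z + v by rewrite /r /z mulmxBr addrAC.
have u0 l : l \notin S -> u l 0 = 0.
  by move=> lS; apply: notin_supp; apply: contra lS => /(subsetP uS).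
have zx l : l \notin S -> z l 0 = x l 0 by move=> /u0 ul; rewrite !mxE ul subr0.
have zT : supp z \subset supp x.
  apply: supp_subset => l lx; rewrite !mxE notin_supp // u0 ?subrr //.
  by apply: contra lx => /(subsetP ST).
have zs : sparse K z by apply: sparse_subset zT _; rewrite cardx.
have [lo hi] := RIP_vnorm Hd (leqW zs : sparse K.+1 z).
have cardA : (0 < #|A|)%N by rewrite cardsD (setIidPr ST) subn_gt0 cardx.
have cardAK : (#|A| <= K)%N by rewrite -cardx subset_leq_card // subsetDl.
have AS : [disjoint A & S] by have /subsetDP[] := subxx A.
have zAS : supp z \subset A :|: S.
  by apply/subsetP => l /(subsetP zT) lx; rewrite in_setU in_setD lx andbT orNb.
have zj : z j 0 = 0 by rewrite zx // notin_supp.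
have PeW : vnorm (Phi *m z) ^+ 2 - vnorm (Phi *m z) * vnorm v <=
           (\sum_(i in A) `|z i 0|) * `|colip Phi j r|.
  apply: le_trans (ip_mulmx_le_colip AS zAS orth jmax).
  rewrite rE ipDr sqr_vnorm norm2E lerD2l.
  by have := normr_ip_le (Phi *m z) v; rewrite ler_norml => /andP[].
have Bb : `|colip Phi j r| <= d * vnorm z + Num.sqrt (1 + d) * vnorm v.
  rewrite rE colipE ipDr -!colipE; apply: le_trans (ler_normD _ _) _.
  apply: lerD; first exact: RIP_colip_offsupp Hd zs zj.
  rewrite colipE; apply: le_trans (normr_ip_le _ _) _.
  by rewrite ler_wpM2r ?vnorm_ge0 // (RIP_vnorm_col _ (ltn0Sn K) Hd).
have qsZ : Num.sqrt #|A|%:R * Num.sqrt s <= vnorm z.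
  rewrite -sqrtrM ?ler0n // ler_sqrt ?norm2_ge0 //.
  apply: le_trans (sum_sqr_le_norm2 z A); rewrite mulr_natl -sumr_const.
  apply: ler_sum => i; rewrite in_setD => /andP[iS ix]; rewrite zx //; exact: xs.
have := omp_step_ineq d0 (sqrtr_ge0 _) (vnorm_ge0 v) _ _ _ qsZ lo hi PeW
  (sumr_ge0 _ (fun i _ => normr_ge0 (z i 0))) (sum_abs_le_sqrt_card z A) Bb.
have q1 : 1 <= Num.sqrt (#|A|%:R : R) by rewrite -[X in X <= _]sqrtr1 ler_sqrt ?ler1n.
have qK : Num.sqrt (#|A|%:R : R) <= Num.sqrt K%:R by rewrite ler_sqrt ?ler_nat.
by move=> /(_ _ _ q1 qK); rewrite sqrtr_gt0 s0 leNgt noise => /(_ isT).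
Qed.

End OMPStep.

Section Run.
Variables (R : rcfType) (m n : nat) (Phi : 'M[R]_(m, n)).

Lemma Tset0 (t : nat -> 'I_n) : Tset t 0 = set0.
Proof. by rewrite /Tset big_geq. Qed.

Lemma TsetS (t : nat -> 'I_n) k : Tset t k.+1 = t k.+1 |: Tset t k.
Proof. by rewrite /Tset big_nat_recr //= setUC. Qed.

Lemma omp_run_ls y K t u k : omp_run Phi y K t u -> (k <= K)%N ->
  supp (u k) \subset Tset t k /\
  forall i, i \in Tset t k -> colip Phi i (y - Phi *m u k) = 0.
Proof.
case: k => [|k] [u0 run] kK.
  rewrite u0 Tset0; split=> [|i]; last by rewrite inE.
  by apply: supp_subset => l _; rewrite mxE.
have [_ _ ls] := run k.+1 kK.
by split=> [|i]; [case: ls | exact: is_ls_orth ls].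
Qed.

Lemma omp_run_supp (x : 'cV[R]_n) (v : 'cV[R]_m) K d s t u :
  RIP_bound Phi K.+1 d -> #|supp x| = K ->
  0 < s -> (forall i, i \in supp x -> s <= x i 0 ^+ 2) ->
  2 * Num.sqrt (1 + d) * vnorm v < (1 - (Num.sqrt K%:R + 1) * d) * Num.sqrt s ->
  omp_run Phi (Phi *m x + v) K t u ->
  forall k, (k <= K)%N -> Tset t k \subset supp x /\ #|Tset t k| = k.
Proof.
move=> Hd cardx s0 xs noise run; elim=> [_|k IH kK].
  by rewrite Tset0 sub0set cards0.
have [Tx cardT] := IH (ltnW kK).
have [uT orth] := omp_run_ls run (ltnW kK).
have [tT tmax _] := run.2 k.+1 kK.
have tx : t k.+1 \in supp x.
  by apply: omp_step_in_supp Hd cardx s0 xs noise Tx _ uT orth tT tmax; rewrite cardT.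
by rewrite TsetS subUset sub1set tx Tx cardsU1 tT cardT.
Qed.

End Run.

Section SignalToNoise.
Variable R : rcfType.

Lemma minsq_le_sqr n (x : 'cV[R]_n) i : i \in supp x -> minsq x <= x i 0 ^+ 2.
Proof. by move=> ix; apply: bigmin_le_cond. Qed.

Lemma minsq_gt0 n (x : 'cV[R]_n) : supp x != set0 -> 0 < minsq x.
Proof.
case/set0Pn=> i0 i0x.
have sqr_gt0 i : i \in supp x -> 0 < x i 0 ^+ 2.
  by rewrite inE => xi; rewrite exprn_even_gt0 // xi orbT.
apply: lt_bigmin => [|i]; last exact: sqr_gt0.
apply: lt_le_trans (sqr_gt0 _ i0x) _.
by have := sum_sqr_le_norm2 x [set i0]; rewrite big_set1.
Qed.

(* With k = K, e2 = |v|^2, x2 = |x|^2, p2 = |Phi x|^2 and s = min x_i^2, the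
   hypothesis is the SNR/MAR condition of the theorem. *)
Lemma snr_mar_noise_bound (k d e2 x2 p2 s : R) :
  0 < k -> 0 <= d -> 0 < 1 - (Num.sqrt k + 1) * d -> 0 < e2 -> 0 < x2 -> 0 < s ->
  0 <= p2 -> p2 <= (1 + d) * x2 ->
  2 * Num.sqrt k * (1 + d) / ((1 - (Num.sqrt k + 1) * d) * Num.sqrt (s / (x2 / k)))
    < Num.sqrt (p2 / e2) ->
  2 * Num.sqrt (1 + d) * Num.sqrt e2 < (1 - (Num.sqrt k + 1) * d) * Num.sqrt s.
Proof.
move=> k0 d0 c0 e0 x0 s0 p0 px; set c := 1 - _ in c0 *.
have mar0 : 0 < s / (x2 / k) by rewrite !divr_gt0.
rewrite ltr_pdivrMr ?mulr_gt0 ?sqrtr_gt0 // => snr.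
have {snr} : (2 * Num.sqrt k * (1 + d)) ^+ 2 <
             (Num.sqrt (p2 / e2) * (c * Num.sqrt (s / (x2 / k)))) ^+ 2.
  by rewrite ltrXn2r // ?nnegrE !mulr_ge0 ?sqrtr_ge0 ?addr_ge0.
rewrite !exprMn !sqr_sqrtr ?divr_ge0 ?(ltW k0) ?(ltW e0) ?(ltW s0) ?(ltW x0) ?(ltW mar0) //.
have d1 : 0 < 1 + d by rewrite ltr_wpDr.
have -> : p2 / e2 * (c ^+ 2 * (s / (x2 / k))) = (p2 / x2) * (c ^+ 2 * s * k / e2).
  by field; rewrite !gt_eqF.
have px' : p2 / x2 <= 1 + d by rewrite ler_pdivrMr.
have w0 : 0 <= c ^+ 2 * s * k / e2.
  by rewrite !(mulr_ge0, invr_ge0) ?sqr_ge0 // ltW.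
move=> /lt_le_trans /(_ (ler_wpM2r w0 px')) noise.
have {noise} : 2 ^+ 2 * (1 + d) * e2 < c ^+ 2 * s.
  have m0 : 0 < k * (1 + d) / e2 by rewrite !(mulr_gt0, invr_gt0).
  rewrite -(ltr_pM2r m0).
  by move: noise; congr (_ < _); field; rewrite gt_eqF.
rewrite -(@ltr_pXn2r _ 2) // ?nnegrE ?mulr_ge0 ?sqrtr_ge0 ?(ltW c0) //.
by rewrite !exprMn !sqr_sqrtr ?(ltW d1) ?(ltW e0) ?(ltW s0).
Qed.

Lemma omp_noise_bound m n (Phi : 'M[R]_(m, n)) (x : 'cV[R]_n) (v : 'cV[R]_m) K d :
  RIP_bound Phi K.+1 d -> #|supp x| = K -> supp x != set0 ->
  0 < 1 - (Num.sqrt K%:R + 1) * d ->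
  (v != 0 -> Num.sqrt (SNR Phi x v) >
     (2 * Num.sqrt K%:R * (1 + d)) / ((1 - (Num.sqrt K%:R + 1) * d) * Num.sqrt (MAR K x))) ->
  2 * Num.sqrt (1 + d) * vnorm v < (1 - (Num.sqrt K%:R + 1) * d) * Num.sqrt (minsq x).
Proof.
move=> Hd cardx x0 cK0 snr; have s0 := minsq_gt0 x0.
have [->|vn0] := eqVneq v 0.
  rewrite /vnorm; have /eqP -> : norm2 (0 : 'cV[R]_m) == 0 by rewrite norm2_eq0.
  by rewrite sqrtr0 mulr0 mulr_gt0 ?sqrtr_gt0.
have pos2 p (a : 'cV[R]_p) : a != 0 -> 0 < norm2 a.
  by move=> a0; rewrite lt_def norm2_eq0 a0 norm2_ge0.
have xn0 : x != 0.
  apply: contra x0 => /eqP ->; apply/eqP/setP => i.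
  by rewrite !inE mxE eqxx.
have [d0 [_ RIP]] := Hd.
have [_ px] := RIP x (leqW (eq_leq cardx)).
apply: snr_mar_noise_bound (pos2 _ _ vn0) (pos2 _ _ xn0) s0 (norm2_ge0 _) px (snr vn0) => //.
by rewrite ltr0n -cardx card_gt0.
Qed.

End SignalToNoise.

Theorem theorem1 (R : rcfType) (m n K : nat) (Phi : 'M[R]_(m, n))
  (x : 'cV[R]_n) (v : 'cV[R]_m) (delta : R) :
  (1 <= K)%N ->
  isometry_constant Phi K.+1 delta ->
  delta < 1 / (Num.sqrt K%:R + 1) ->
  #|supp x| = K ->
  (v != 0 ->
     Num.sqrt (SNR Phi x v) >
     (2 * Num.sqrt K%:R * (1 + delta)) /
       ((1 - (Num.sqrt K%:R + 1) * delta) * Num.sqrt (MAR K x))) ->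
  forall (t : nat -> 'I_n) (u : nat -> 'cV[R]_n),
    omp_run Phi (Phi *m x + v) K t u ->
    (forall k : nat, (1 <= k <= K)%N -> t k \in supp x) /\ Tset t K = supp x.
Proof.
move=> K0 [Hd _] dK cardx snr t u run.
have cK0 : 0 < 1 - (Num.sqrt K%:R + 1) * delta.
  by rewrite subr_gt0 mulrC -ltr_pdivlMr ?ltr_wpDl ?sqrtr_ge0.
have x0 : supp x != set0 by rewrite -card_gt0 cardx.
have noise := omp_noise_bound Hd cardx x0 cK0 snr.
have T_supp := omp_run_supp Hd cardx (minsq_gt0 x0) (@minsq_le_sqr _ _ x) noise run.
split=> [[|k] // /andP[_ kK]|].
  by have [/subsetP -> //] := T_supp k.+1 kK; rewrite TsetS setU11.
have [TK cardTK] := T_supp K (leqnn K).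
by apply/eqP; rewrite eqEcard TK cardTK cardx leqnn.
Qed.
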